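(* In the standing setup, the function $L\mapsto\gamma_L\tau_L$ on $\mathcal{V}$ satisfies $|D|(\gamma\tau)(L)\le6\gamma_L^2\tau_L^2$ at every $L\in\mathcal{V}$.
   Context: Standing setup: $\mathcal{X}$ is a real or complex Banach space; $L_0\in\mathcal{B}(\mathcal{X})$ has a simple isolated eigenvalue $\lambda_0$ (there are $u\ne0$ with $L_0u=\lambda_0u$ and a closed $L_0$-invariant complement $G$ of $\langle u\rangle$ with $(L_0-\lambda_0)|_G$ boundedly invertible). $\mathcal{V}$ is an open neighborhood of $L_0$ on which there are analytic maps $\lambda,u,\phi$ with $\lambda_{L_0}=\lambda_0$, $\lambda_L$ a simple isolated eigenvalue of $L$ with eigenvector $u_L$ and eigenform $\phi_L$ ($\phi_L\circ L=\lambda_L\phi_L$), $\phi_L(u_L)=1$. $P_L=\phi_L(\cdot)u_L$, $\pi_L=\mathrm{Id}-P_L$, $S_L=(L-\lambda_L)|_{\ker\phi_L}^{-1}\pi_L$, $\tau_L=\|P_L\|$ (note $\tau_L\ge1$), $\gamma_L=\|S_L\|$. The metric derivative of a real function $f$ is $|D|f(x)=\limsup_{r\to0}\sup_{y\in B(x,r)}|f(x)-f(y)|/\|x-y\|$. *)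

From HB Require Import structures.
From mathcomp Require Import all_boot all_order all_algebra.
From mathcomp Require Import complex.
From mathcomp Require Import all_classical all_reals all_analysis.
Set Implicit Arguments. Unset Strict Implicit. Unset Printing Implicit Defensive.
Import Order.TTheory GRing.Theory Num.Theory.
Local Open Scope ring_scope.
Local Open Scope classical_set_scope.

(* The scalar field: R (b = false, real Banach spaces) or R[i] (b = true,
   complex Banach spaces). *)
Definition scal (R : realType) (b : bool) : numFieldType :=
  if b then (R[i] : numFieldType) else (R : numFieldType).

(* Norm values live in the scalar field; this maps them back to R
   (for R[i], the real part; norms are real and nonnegative). *)
Definition toR (R : realType) (b : bool) : scal R b -> R :=
  match b return scal R b -> R with
  | true => fun z => complex.Re z
  | false => fun x => x
  end.

Section Defs.
Variables (R : realType) (b : bool) (X : completeNormedModType (scal R b)).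
Local Notation K := (scal R b).

Definition nX (x : X) : R := toR `|x|.
Definition nK (a : K) : R := toR `|a|.

Definition is_linear_map (Y : Type) (addY : Y -> Y -> Y) (scaleY : K -> Y -> Y)
  (T : X -> Y) := forall (a : K) (x y : X), T (a *: x + y) = addY (scaleY a (T x)) (T y).

Definition bounded_op (T : X -> X) :=
  is_linear_map +%R *:%R T /\ exists C : R, forall x, nX (T x) <= C * nX x.

Definition bounded_form (f : X -> K) :=
  is_linear_map +%R *%R f /\ exists C : R, forall x, nK (f x) <= C * nX x.

Definition opnorm (T : X -> X) : R := sup [set nX (T x) | x in [set x | nX x <= 1]].
Definition formnorm (f : X -> K) : R := sup [set nK (f x) | x in [set x | nX x <= 1]].

Definition opsub (T T' : X -> X) : X -> X := fun x => T x - T' x.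

Definition open_in_BX (V : set (X -> X)) :=
  forall L, V L -> bounded_op L /\
    exists r : R, 0 < r /\
      forall L', bounded_op L' -> opnorm (opsub L' L) < r -> V L'.

(* Simple isolated eigenvalue, as in the standing setup: an eigenvector u <> 0
   and a closed L-invariant complement G of <u> on which (L - l) is boundedly
   invertible. *)
Definition simple_isolated_eigenvalue (L : X -> X) (l : K) :=
  exists u : X, u != 0 /\ L u = l *: u /\
  exists G : set X,
    [/\ G 0, (forall (a : K) x y, G x -> G y -> G (a *: x + y)),
        closed G & (forall x, G x -> G (L x))] /\
    (forall x, exists p : K * X, G p.2 /\ x = p.1 *: u + p.2) /\
    (forall (a : K) g, G g -> a *: u + g = 0 -> a = 0) /\
    (forall y, G y -> exists x, G x /\ L x - l *: x = y) /\
    (exists C : R, forall x, G x -> nX x <= C * nX (L x - l *: x)).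

(* Analyticity on an open set V of B(X) of a map into a normed space Y
   (given by addition, scaling and real norm nY): near each point L of V
   f(L + H) = sum_k A_k(H,...,H), A_k bounded k-linear with
   ||A_k(h_0..h_{k-1})|| <= C_k prod ||h_i|| and sum_k C_k r^k < oo. *)
Definition upd (h : nat -> X -> X) (i : nat) (v : X -> X) : nat -> X -> X :=
  fun j => if j == i then v else h j.

Definition opadd (T T' : X -> X) : X -> X := fun x => T x + T' x.
Definition opscale (a : K) (T : X -> X) : X -> X := fun x => a *: T x.

Definition analytic_on (Y : Type) (zeroY : Y) (addY : Y -> Y -> Y)
  (scaleY : K -> Y -> Y) (nY : Y -> R)
  (V : set (X -> X)) (f : (X -> X) -> Y) :=
  forall L, V L ->
  exists (r : R) (A : nat -> (nat -> X -> X) -> Y) (C : nat -> R),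
  0 < r /\
  [/\
      (forall k h h', (forall i, (i < k)%N -> h i = h' i) -> A k h = A k h'),
      (forall k i h (a : K) v w, (i < k)%N ->
         (forall j, bounded_op (h j)) -> bounded_op v -> bounded_op w ->
         A k (upd h i (opadd (opscale a v) w)) =
           addY (scaleY a (A k (upd h i v))) (A k (upd h i w))),
      (forall k h, (forall j, bounded_op (h j)) ->
         0 <= C k /\ nY (A k h) <= C k * \prod_(i < k) opnorm (h i)),
      (exists M : R, forall n, \sum_(k < n) C k * r ^+ k <= M) &
      (forall H, bounded_op H -> opnorm H < r ->
         forall eps : R, 0 < eps -> exists N : nat, forall n, (N <= n)%N ->
           nY (addY (f (opadd L H))
                    (scaleY (-1) (\big[addY/zeroY]_(k < n) A k (fun _ => H))))
             < eps)].

Definition P_of (u : X) (phi : X -> K) : X -> X := fun x => phi x *: u.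
Definition pi_of (u : X) (phi : X -> K) : X -> X := fun x => x - phi x *: u.
(* S_L = (L - lam)|_{ker phi}^{-1} pi_L : S_L x is the y in ker phi with
   (L - lam) y = pi_L x (unique under the standing assumptions). *)
Definition S_of (L : X -> X) (lam : K) (u : X) (phi : X -> K) : X -> X :=
  fun x => xget 0 [set y | phi y = 0 /\ L y - lam *: y = pi_of u phi x].

(* Metric derivative |D|f(x) = limsup_{r -> 0} sup_{y in B(x,r)} |f x - f y|/||x-y||,
   on B(X) with the operator norm; y = x is excluded from the sup (0/0), and the
   limsup of the nonincreasing family r |-> sup_{B(x,r)} is its infimum over r > 0. *)
Definition metric_deriv (f : (X -> X) -> R) (L : X -> X) : \bar R :=
  ereal_inf [set ereal_sup [set (`|f L - f L'| / opnorm (opsub L L'))%:E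
                             | L' in [set L' | bounded_op L' /\
                                  0 < opnorm (opsub L L') < r]]
            | r in [set r : R | 0 < r]].

End Defs.

(* Write L' = L + E, h = ||E||, and F = E - (lam' - lam).  Comparing the defining
   equations of the spectral data at L and L' gives the exact identities
     P' - P = - P' F S - S' F P,      S' - S = - S' F S + S' P - P' S,
   while analyticity of lam and u gives |lam' - lam| = O(h) and ||u' - u|| = O(h).
   For small h these first yield a priori bounds tau' <= 3 tau and
   gamma' <= 2 (gamma + tau) (1 + 3 tau), and then
     ||P' - P|| <= (2 gamma tau + O(h)) h,   ||S' - S|| <= (gamma^2 + 3 gamma^2 tau + O(h)) h.
   Hence |gamma tau - gamma' tau'| <= gamma' ||P' - P|| + tau ||S' - S||
   <= (3 gamma^2 tau + 3 gamma^2 tau^2 + O(h)) h, which is at most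
   (6 gamma^2 tau^2 + O(h)) h because tau >= 1. *)

From Pilot Require Import Defs.
From HB Require Import structures.
From mathcomp Require Import all_boot all_order all_algebra.
From mathcomp Require Import complex.
From mathcomp Require Import all_classical all_reals all_analysis.
From mathcomp Require Import ring lra.
Import Order.TTheory GRing.Theory Num.Theory.
Local Open Scope ring_scope.
Local Open Scope classical_set_scope.
Set Implicit Arguments. Unset Strict Implicit. Unset Printing Implicit Defensive.

Lemma subrACA (V : zmodType) (a b c d : V) : (a - b) - (c - d) = (a - c) - (b - d).
Proof. by rewrite !opprB addrACA [RHS]addrACA; congr (_ + _); exact: addrC. Qed.

Lemma le_of_eq (R : numDomainType) (x y : R) : x = y -> x <= y.
Proof. by move=> ->. Qed.

Section ScalarToReal.
Variables (R : realType) (b : bool).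

Lemma toRD (x y : scal R b) : toR (x + y) = toR x + toR y.
Proof. by case: b x y => //= -[? ?] [? ?]. Qed.

Lemma toR0 : toR (0 : scal R b) = 0.
Proof. by case: b. Qed.

Lemma toR1 : toR (1 : scal R b) = 1.
Proof. by case: b. Qed.

Lemma ler_toR (x y : scal R b) : x <= y -> toR x <= toR y.
Proof. by case: b x y => //= x y; rewrite lecE => /andP[_ ->]. Qed.

Lemma toR_ge0 (x : scal R b) : 0 <= x -> 0 <= toR x.
Proof. by move=> x0; rewrite -toR0; apply: ler_toR. Qed.

Lemma toRM_ge0 (x y : scal R b) : 0 <= x -> 0 <= y -> toR (x * y) = toR x * toR y.
Proof.
case: b x y => //= -[x1 x2] [y1 y2] /ger0_Im/= -> /ger0_Im/= ->.
by rewrite mulr0 subr0.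
Qed.

Lemma toR_eq0 (x : scal R b) : 0 <= x -> toR x = 0 -> x = 0.
Proof. by case: b x => //= -[x1 x2] /ger0_Im/= -> /= ->. Qed.

Definition ofR (r : R) : scal R b :=
  match b return scal R b with true => (r%:C)%C | false => r end.

Lemma toR_ofR (r : R) : toR (ofR r) = r.
Proof. by rewrite /ofR; case: b. Qed.

Lemma ofR_ge0 (r : R) : 0 <= r -> 0 <= ofR r.
Proof. by rewrite /ofR; case: b => //= r0; rewrite lecR. Qed.

Lemma ofRM (r s : R) : ofR (r * s) = ofR r * ofR s.
Proof. by rewrite /ofR; case: b => //=; rewrite rmorphM. Qed.

Lemma ofR1 : ofR 1 = 1.
Proof. by rewrite /ofR; case: b. Qed.

End ScalarToReal.

(** * Norms and bounded operators *)

Section RealNorms.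
Variables (R : realType) (b : bool) (X : completeNormedModType (scal R b)).
Local Notation K := (scal R b).
Local Notation nX := (@nX R b X).
Local Notation nK := (@nK R b).

Lemma nX_ge0 (x : X) : 0 <= nX x.
Proof. exact/toR_ge0/normr_ge0. Qed.

Lemma nK_ge0 (a : K) : 0 <= nK a.
Proof. exact/toR_ge0/normr_ge0. Qed.

Lemma ler_nXD (x y : X) : nX (x + y) <= nX x + nX y.
Proof. by rewrite /Defs.nX -toRD; apply/ler_toR/ler_normD. Qed.

Lemma ler_nKD (x y : K) : nK (x + y) <= nK x + nK y.
Proof. by rewrite /Defs.nK -toRD; apply/ler_toR/ler_normD. Qed.

Lemma nXZ (a : K) (x : X) : nX (a *: x) = nK a * nX x.
Proof. by rewrite /Defs.nX normrZ toRM_ge0. Qed.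

Lemma nKM (a c : K) : nK (a * c) = nK a * nK c.
Proof. by rewrite /Defs.nK normrM toRM_ge0. Qed.

Lemma nXN (x : X) : nX (- x) = nX x.
Proof. by rewrite /Defs.nX normrN. Qed.

Lemma nKN (x : K) : nK (- x) = nK x.
Proof. by rewrite /Defs.nK normrN. Qed.

Lemma nX0 : nX 0 = 0.
Proof. by rewrite /Defs.nX normr0 toR0. Qed.

Lemma nK0 : nK 0 = 0.
Proof. by rewrite /Defs.nK normr0 toR0. Qed.

Lemma nK1 : nK 1 = 1.
Proof. by rewrite /Defs.nK normr1 toR1. Qed.

Lemma nX_eq0 (x : X) : nX x = 0 -> x = 0.
Proof. by move/toR_eq0 => /(_ (normr_ge0 _)) /normr0_eq0. Qed.

Lemma nK_eq0 (x : K) : nK x = 0 -> x = 0.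
Proof. by move/toR_eq0 => /(_ (normr_ge0 _)) /normr0_eq0. Qed.

Lemma nX_le0 (x : X) : nX x <= 0 -> x = 0.
Proof. by move=> x0; apply: nX_eq0; apply/le_anti; rewrite x0 nX_ge0. Qed.

Lemma nK_le0 (x : K) : nK x <= 0 -> x = 0.
Proof. by move=> x0; apply: nK_eq0; apply/le_anti; rewrite x0 nK_ge0. Qed.

Lemma nK_ofR (r : R) : 0 <= r -> nK (ofR b r) = r.
Proof. by move=> r0; rewrite /Defs.nK ger0_norm ?toR_ofR // ofR_ge0. Qed.

Lemma nX_subC (x y : X) : nX (x - y) = nX (y - x).
Proof. by rewrite -nXN opprB. Qed.

Lemma ler_nXB (x y : X) : nX x - nX y <= nX (x - y).
Proof. by have := ler_nXD (x - y) y; rewrite subrK; lra. Qed.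

Lemma ler_nX_subZ (x y : X) (a : K) : nX (x - a *: y) <= nX x + nK a * nX y.
Proof. by apply: le_trans (ler_nXD _ _) _; rewrite nXN nXZ. Qed.

(* [opnorm] and [formnorm] are both instances of this supremum. *)
Definition sup_ball (g : X -> R) : R := sup [set g x | x in [set x | nX x <= 1]].

Lemma sup_ball_le (g : X -> R) (c : R) : 0 <= c ->
  (forall x, g x <= c * nX x) -> sup_ball g <= c.
Proof.
move=> c0 hg; apply: ge_sup; first by exists (g 0), 0 => //=; rewrite nX0.
move=> _ [x /= x1 <-]; apply: le_trans (hg x) _.
by rewrite -[leRHS]mulr1 ler_wpM2l.
Qed.

Lemma sup_ball_has_ubound (g : X -> R) (C : R) : (forall x, g x <= C * nX x) ->
  has_ubound [set g x | x in [set x | nX x <= 1]].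
Proof.
move=> hC; exists `|C| => _ [y /= y1 <-]; apply: le_trans (hC y) _.
by have := nX_ge0 y; have := ler_norm C; have := normr_ge0 C; nra.
Qed.

Lemma sup_ball_ge0 (g : X -> R) (C : R) : (forall x, 0 <= g x) ->
  (forall x, g x <= C * nX x) -> 0 <= sup_ball g.
Proof.
move=> g0 hC; apply: le_trans (g0 0) _; apply: ub_le_sup.
  exact: sup_ball_has_ubound hC.
by exists 0 => //=; rewrite nX0.
Qed.

(* Homogeneity lets one rescale any [x <> 0] to the unit sphere. *)
Lemma ler_sup_ball (g : X -> R) (C : R) :
  (forall (a : K) x, g (a *: x) = nK a * g x) -> (forall x, 0 <= g x) ->
  (forall x, g x <= C * nX x) -> forall x, g x <= sup_ball g * nX x.
Proof.
move=> gZ g0 hC x.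
have [x0|xn0] := eqVneq (nX x) 0.
  by rewrite x0 mulr0 (nX_eq0 x0) -(scale0r 0) gZ /Defs.nK normr0 toR0 mul0r.
have xp : 0 < nX x by rewrite lt_neqAle eq_sym xn0 nX_ge0.
set y := ofR b (nX x)^-1 *: x.
have ny : nX y = 1 by rewrite nXZ nK_ofR ?invr_ge0 ?nX_ge0 // mulVf.
have -> : x = ofR b (nX x) *: y by rewrite /y scalerA -ofRM mulfV // ofR1 scale1r.
rewrite gZ nXZ nK_ofR ?nX_ge0 // ny mulr1 mulrC ler_wpM2r ?nX_ge0 //.
by apply: ub_le_sup; [exact: sup_ball_has_ubound hC | exists y => //=; rewrite ny].
Qed.

End RealNorms.

Ltac nonneg := repeat first
  [ assumption | exact: ler01 | exact: ler0n | exact: nX_ge0 | exact: nK_ge0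
  | apply: addr_ge0 | apply: mulr_ge0 | rewrite invr_ge0 | apply: ltW; assumption ].

Section Operators.
Variables (R : realType) (b : bool) (X : completeNormedModType (scal R b)).
Local Notation K := (scal R b).
Local Notation nX := (@nX R b X).
Local Notation nK := (@nK R b).
Local Notation linear_op := (is_linear_map +%R *:%R).
Local Notation linear_form := (is_linear_map +%R *%R).

Section LinearOp.
Variable T : X -> X.
Hypothesis lT : linear_op T.

Lemma linear_op0 : T 0 = 0.
Proof. by apply: (addrI (T 0)); rewrite addr0 -{1}(scale1r (T 0)) -lT scale1r addr0. Qed.

Lemma linear_opD x y : T (x + y) = T x + T y.
Proof. by have := lT 1 x y; rewrite !scale1r. Qed.

Lemma linear_opZ a x : T (a *: x) = a *: T x.
Proof. by have := lT a x 0; rewrite !addr0 linear_op0 addr0. Qed.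

Lemma linear_opN x : T (- x) = - T x.
Proof. by rewrite -scaleN1r linear_opZ scaleN1r. Qed.

Lemma linear_opB x y : T (x - y) = T x - T y.
Proof. by rewrite linear_opD linear_opN. Qed.

End LinearOp.

Section LinearForm.
Variable f : X -> K.
Hypothesis lf : linear_form f.

Lemma linear_form0 : f 0 = 0.
Proof. by apply: (addrI (f 0)); rewrite addr0 -{1}(mul1r (f 0)) -lf scale1r addr0. Qed.

Lemma linear_formD x y : f (x + y) = f x + f y.
Proof. by have := lf 1 x y; rewrite !scale1r mul1r. Qed.

Lemma linear_formZ a x : f (a *: x) = a * f x.
Proof. by have := lf a x 0; rewrite !addr0 linear_form0 addr0. Qed.

Lemma linear_formB x y : f (x - y) = f x - f y.
Proof. by rewrite linear_formD -scaleN1r linear_formZ mulN1r. Qed.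

End LinearForm.

Lemma ler_opnorm (T : X -> X) : bounded_op T -> forall x, nX (T x) <= opnorm T * nX x.
Proof.
move=> [lT [C hC]]; apply: (ler_sup_ball _ _ hC) => [a x|x]; last exact: nX_ge0.
by rewrite (linear_opZ lT) nXZ.
Qed.

Lemma ler_formnorm (f : X -> K) : bounded_form f -> forall x, nK (f x) <= formnorm f * nX x.
Proof.
move=> [lf [C hC]]; apply: (ler_sup_ball _ _ hC) => [a x|x]; last exact: nK_ge0.
by rewrite (linear_formZ lf) nKM.
Qed.

Lemma opnorm_le (T : X -> X) c : 0 <= c -> (forall x, nX (T x) <= c * nX x) ->
  opnorm T <= c.
Proof. exact: sup_ball_le. Qed.

Lemma formnorm_le (f : X -> K) c : 0 <= c -> (forall x, nK (f x) <= c * nX x) ->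
  formnorm f <= c.
Proof. exact: sup_ball_le. Qed.

Lemma opnorm_ge0 (T : X -> X) : bounded_op T -> 0 <= opnorm T.
Proof. by move=> [_ [C hC]]; apply: (sup_ball_ge0 _ hC) => x; apply: nX_ge0. Qed.

Lemma formnorm_ge0 (f : X -> K) : bounded_form f -> 0 <= formnorm f.
Proof. by move=> [_ [C hC]]; apply: (sup_ball_ge0 _ hC) => x; apply: nK_ge0. Qed.

Lemma bounded_opsub (T T' : X -> X) :
  bounded_op T -> bounded_op T' -> bounded_op (opsub T T').
Proof.
move=> [lT [C hC]] [lT' [C' hC']]; split.
  move=> a x y; rewrite /opsub (linear_opD lT) (linear_opD lT') (linear_opZ lT) (linear_opZ lT').
  by rewrite scalerBr opprD addrACA.
exists (C + C') => x; apply: le_trans (ler_nXD _ _) _.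
by rewrite nXN mulrDl lerD.
Qed.

Lemma bounded_op0 : bounded_op (fun _ : X => 0).
Proof.
split; first by move=> a x y; rewrite scaler0 addr0.
by exists 0 => x; rewrite nX0 mul0r.
Qed.

Lemma opnorm0 : opnorm (fun _ : X => 0) = 0.
Proof.
apply/le_anti/andP; split; last exact: opnorm_ge0 bounded_op0.
by apply: opnorm_le => // x; rewrite nX0 mul0r.
Qed.

Lemma opnorm_subC (T T' : X -> X) : opnorm (opsub T T') = opnorm (opsub T' T).
Proof.
rewrite /opnorm; congr sup; apply/funext => r /=.
by apply/propext; split => -[x x1 <-]; exists x => //; rewrite /opsub nX_subC.
Qed.

Lemma opnorm_subr (T T' : X -> X) : bounded_op T -> bounded_op T' ->
  opnorm T' <= opnorm T + opnorm (opsub T' T).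
Proof.
move=> bT bT'; apply: opnorm_le => [|x].
  by apply: addr_ge0; apply: opnorm_ge0 => //; exact: bounded_opsub.
have := ler_nXD (T x) (T' x - T x); rewrite addrC subrK mulrDl => h.
apply: le_trans h _; apply: lerD; first exact: ler_opnorm.
exact: ler_opnorm (bounded_opsub bT' bT) x.
Qed.

Lemma ler_opnorm2 (T1 T2 : X -> X) : bounded_op T1 -> bounded_op T2 ->
  forall x, nX (T1 (T2 x)) <= opnorm T1 * opnorm T2 * nX x.
Proof.
move=> b1 b2 x; apply: le_trans (ler_opnorm b1 _) _.
by rewrite -mulrA ler_wpM2l ?opnorm_ge0 ?ler_opnorm.
Qed.

Lemma ler_opnorm3 (T1 T2 T3 : X -> X) :
  bounded_op T1 -> bounded_op T2 -> bounded_op T3 ->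
  forall x, nX (T1 (T2 (T3 x))) <= opnorm T1 * opnorm T2 * opnorm T3 * nX x.
Proof.
move=> b1 b2 b3 x; apply: le_trans (ler_opnorm b1 _) _.
by rewrite -!mulrA ler_wpM2l ?opnorm_ge0 // mulrA ler_opnorm2.
Qed.

Lemma ler_opnorm4 (T1 T2 T3 T4 : X -> X) :
  bounded_op T1 -> bounded_op T2 -> bounded_op T3 -> bounded_op T4 ->
  forall x, nX (T1 (T2 (T3 (T4 x)))) <=
            opnorm T1 * opnorm T2 * opnorm T3 * opnorm T4 * nX x.
Proof.
move=> b1 b2 b3 b4 x; apply: le_trans (ler_opnorm b1 _) _.
by rewrite -!mulrA ler_wpM2l ?opnorm_ge0 // !mulrA ler_opnorm3.
Qed.

End Operators.

(** * Spectral data and its perturbation *)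

Section SpectralData.
Variables (R : realType) (b : bool) (X : completeNormedModType (scal R b)).
Local Notation K := (scal R b).
Local Notation nX := (@nX R b X).
Local Notation nK := (@nK R b).

Definition shift_op (L : X -> X) (lam : K) : X -> X := fun x => L x - lam *: x.

Record spectral_data (L : X -> X) (lam : K) (u : X) (phi : X -> K) (S : X -> X) :
    Prop := SpectralData {
  sd_bounded : bounded_op L;
  sd_form : bounded_form phi;
  sd_eigvec : L u = lam *: u;
  sd_normalized : phi u = 1;
  sd_eigform : forall x, phi (L x) = lam * phi x;
  sd_reduced : forall x, phi (S x) = 0 /\ shift_op L lam (S x) = x - phi x *: u;
  sd_injective : forall y, phi y = 0 -> shift_op L lam y = 0 -> y = 0;
  sd_reduced_bounded : exists C, forall x, nX (S x) <= C * nX x }.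

Lemma spectral_data_S_of (L : X -> X) (lam : K) (u : X) (phi : X -> K) :
  bounded_op L -> simple_isolated_eigenvalue L lam ->
  L u = lam *: u -> bounded_form phi ->
  (forall x, phi (L x) = lam * phi x) -> phi u = 1 ->
  spectral_data L lam u phi (S_of L lam u phi).
Proof.
move=> bL [u0 [_ [Lu0 [G [[_ _ _ _] [Gdec [_ [Gsurj [C hC]]]]]]]]] Lu bphi phiL phiu.
have [lL _] := bL; have [lphi [F hF]] := bphi.
have phiG g : G g -> phi g = 0.
  by move=> /Gsurj [h [_ <-]]; rewrite linear_formB // linear_formZ // phiL subrr.
have injG g : G g -> L g - lam *: g = 0 -> g = 0.
  by move=> Gg h0; apply: nX_le0; have := hC g Gg; rewrite h0 nX0 mulr0.
have phi_u0 : phi u0 != 0.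
  have [[c g] /= [Gg ug]] := Gdec u.
  have g0 : g = 0.
    apply: injG => //; have : L u - lam *: u = 0 by rewrite Lu subrr.
    rewrite ug (linear_opD lL) (linear_opZ lL) Lu0 scalerA mulrC -scalerA scalerDr.
    by rewrite opprD addrACA subrr add0r.
  apply/eqP => h0; move: phiu; rewrite ug g0 addr0 linear_formZ // h0 mulr0.
  by move/eqP; rewrite eq_sym oner_eq0.
have kerG x : phi x = 0 -> G x.
  move=> px; have [[c g] /= [Gg xg]] := Gdec x.
  rewrite xg; suff -> : c = 0 by rewrite scale0r add0r.
  move: px; rewrite xg linear_formD // linear_formZ // (phiG _ Gg) addr0 => /eqP.
  by rewrite mulf_eq0 (negPf phi_u0) orbF => /eqP.
have hS x : phi (S_of L lam u phi x) = 0 /\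
    shift_op L lam (S_of L lam u phi x) = x - phi x *: u.
  have : exists y, phi y = 0 /\ L y - lam *: y = Defs.pi_of u phi x.
    have : G (x - phi x *: u).
      by apply: kerG; rewrite linear_formB // linear_formZ // phiu mulr1 subrr.
    by move=> /Gsurj [z [Gz hz]]; exists z; split => //; apply: phiG.
  exact: xgetPex.
constructor => // [y py|]; first exact/injG/kerG.
exists (`|C| * (1 + `|F| * nX u)) => x.
have [p1 p2] := hS x.
apply: le_trans (hC _ (kerG _ p1)) _; rewrite [_ - _]p2.
apply: le_trans (ler_wpM2r (nX_ge0 _) (ler_norm C)) _.
have -> : `|C| * (1 + `|F| * nX u) * nX x = `|C| * (nX x + `|F| * nX u * nX x) by ring.
rewrite ler_wpM2l //; apply: le_trans (ler_nX_subZ _ _ _) _.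
rewrite lerD2l mulrAC ler_wpM2r ?nX_ge0 //.
by apply: le_trans (hF x) _; rewrite ler_wpM2r ?nX_ge0 ?ler_norm.
Qed.

Variables (L : X -> X) (lam : K) (u : X) (phi : X -> K) (S : X -> X).
Hypothesis sd : spectral_data L lam u phi S.

Local Notation P := (P_of u phi).
Local Notation N := (shift_op L lam).

Let lL := (sd_bounded sd).1.
Let lphi := (sd_form sd).1.

Lemma shift_op_linear : is_linear_map +%R *:%R N.
Proof.
move=> a x y; rewrite /shift_op (linear_opD lL) (linear_opZ lL) scalerDr scalerA.
by rewrite mulrC -scalerA opprD addrACA -scalerBr.
Qed.

Lemma P_linear : is_linear_map +%R *:%R P.
Proof. by move=> a x y; rewrite /P_of linear_formD // linear_formZ // scalerDl scalerA. Qed.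

Lemma phi_S x : phi (S x) = 0.
Proof. by have [] := sd_reduced sd x. Qed.

Lemma shift_S x : N (S x) = x - P x.
Proof. by have [] := sd_reduced sd x. Qed.

Lemma S_unique x y : phi y = 0 -> N y = x - P x -> S x = y.
Proof.
move=> phiy Ny; apply/eqP; rewrite -subr_eq0; apply/eqP; apply: (sd_injective sd).
  by rewrite linear_formB // phi_S phiy subrr.
by rewrite (linear_opB shift_op_linear) shift_S Ny subrr.
Qed.

Lemma S_linear : is_linear_map +%R *:%R S.
Proof.
move=> a x y; apply: S_unique; first by rewrite linear_formD // linear_formZ // !phi_S mulr0 addr0.
rewrite shift_op_linear !shift_S /P_of linear_formD // linear_formZ //.
by rewrite scalerBr scalerA scalerDl opprD addrACA.
Qed.

Lemma phi_shift x : phi (N x) = 0.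
Proof. by rewrite /shift_op linear_formB // linear_formZ // (sd_eigform sd) subrr. Qed.

Lemma P_shift x : P (N x) = 0.
Proof. by rewrite /P_of phi_shift scale0r. Qed.

Lemma shift_P x : N (P x) = 0.
Proof. by rewrite /P_of (linear_opZ shift_op_linear) /shift_op (sd_eigvec sd) subrr scaler0. Qed.

Lemma P_idem x : P (P x) = P x.
Proof. by rewrite /P_of linear_formZ // (sd_normalized sd) mulr1. Qed.

Lemma P_u : P u = u.
Proof. by rewrite /P_of (sd_normalized sd) scale1r. Qed.

Lemma P_S x : P (S x) = 0.
Proof. by rewrite /P_of phi_S scale0r. Qed.

Lemma S_P x : S (P x) = 0.
Proof. by apply: S_unique; rewrite ?linear_form0 ?(linear_op0 shift_op_linear) ?P_idem ?subrr. Qed.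

Lemma S_shift x : S (N x) = x - P x.
Proof.
apply: S_unique.
  by rewrite linear_formB // /P_of linear_formZ // (sd_normalized sd) mulr1 subrr.
by rewrite P_shift subr0 (linear_opB shift_op_linear) shift_P subr0.
Qed.

Lemma S_add_P_shift_add_P y : S (N y + P y) + P (N y + P y) = y.
Proof.
rewrite (linear_opD S_linear) (linear_opD P_linear) S_shift S_P P_shift P_idem.
by rewrite addr0 add0r subrK.
Qed.

Lemma nX_u_gt0 : 0 < nX u.
Proof.
rewrite lt_neqAle nX_ge0 andbT; apply/eqP => /esym /nX_eq0 u0.
by have := sd_normalized sd; rewrite u0 linear_form0 // => /eqP; rewrite eq_sym oner_eq0.
Qed.

Lemma S_bounded : bounded_op S.
Proof. by split; [exact: S_linear | exact: sd_reduced_bounded sd]. Qed.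

Lemma P_bounded : bounded_op P.
Proof.
split; first exact: P_linear.
have [F hF] := (sd_form sd).2; exists (F * nX u) => x.
by rewrite /P_of nXZ mulrAC ler_wpM2r ?nX_ge0.
Qed.

Lemma opnorm_P_ge1 : 1 <= opnorm P.
Proof.
have := ler_opnorm P_bounded u; rewrite {1}/P_of (sd_normalized sd) scale1r.
by rewrite -{1}[nX u]mul1r ler_pM2r // nX_u_gt0.
Qed.

Lemma ler_phi (x : X) : nK (phi x) * nX u <= opnorm P * nX x.
Proof. by rewrite -nXZ; exact: ler_opnorm P_bounded x. Qed.

End SpectralData.

Section Perturbation.
Variables (R : realType) (b : bool) (X : completeNormedModType (scal R b)).
Local Notation K := (scal R b).
Local Notation nX := (@nX R b X).
Local Notation nK := (@nK R b).
Variables (L : X -> X) (lam : K) (u : X) (phi : X -> K) (S : X -> X).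
Variables (L' : X -> X) (lam' : K) (u' : X) (phi' : X -> K) (S' : X -> X).
Hypothesis sd : spectral_data L lam u phi S.
Hypothesis sd' : spectral_data L' lam' u' phi' S'.

Local Notation P := (P_of u phi).
Local Notation P' := (P_of u' phi').
Local Notation N := (shift_op L lam).
Local Notation N' := (shift_op L' lam').
Local Notation E := (opsub L' L).
Let dl := lam' - lam.
Let F x := E x - dl *: x.

Let lphi := (sd_form sd).1.
Let lphi' := (sd_form sd').1.
Let lS' := S_linear sd'.
Let lP' := P_linear sd'.

Lemma shift_op_perturb x : N' x = N x + F x.
Proof.
rewrite /shift_op /F /opsub /dl scalerBl.
by rewrite subrACA [RHS]addrC subrK.
Qed.

Lemma P'_pi x : P' (x - P x) = - P' (F (S x)).
Proof.
by rewrite -(shift_S sd) -[N _](addrK (F (S x))) -shift_op_perturb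
  (linear_opB lP') (P_shift sd') sub0r.
Qed.

Lemma P_sub_P'P x : P x - P' (P x) = S' (F (P x)).
Proof. by rewrite -(S_shift sd') shift_op_perturb (shift_P sd) add0r. Qed.

Lemma P'_sub_P x : P' x - P x = - P' (F (S x)) - S' (F (P x)).
Proof. by rewrite -P'_pi -P_sub_P'P (linear_opB lP') subrACA subrr subr0. Qed.

Lemma S'_sub_S x : S' x - S x = - S' (F (S x)) + S' (P x) - P' (S x).
Proof.
have -> : S' x = S' (P x) + S' (N (S x)).
  by rewrite (shift_S sd) -(linear_opD lS') addrC subrK.
have -> : S' (N (S x)) = S x - P' (S x) - S' (F (S x)).
  by rewrite -[N _](addrK (F (S x))) -shift_op_perturb (linear_opB lS') (S_shift sd').
rewrite -addrA [(S x - _ - _) - S x]addrAC [S x - _ - S x]addrAC subrr add0r.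
by rewrite [- S' _ + S' _]addrC addrAC addrA.
Qed.

Lemma S'_P x : S' (P x) = S' (S' (F (P x))).
Proof. by rewrite -P_sub_P'P (linear_opB lS') (S_P sd') subr0. Qed.

Lemma P'_S x : P' (S x) = - P' (F (S (S x))).
Proof. by rewrite -P'_pi (P_S sd) subr0. Qed.

Lemma P'_E_u : P' (E u) = dl *: P' u.
Proof.
rewrite /P_of /opsub linear_formB // (sd_eigform sd') (sd_eigvec sd) linear_formZ //.
by rewrite -mulrBl scalerA.
Qed.

Lemma phi'_expand x : phi' x = phi x * phi' u - phi' (F (S x + P x)).
Proof.
set z := S x + P x.
have ex : x = N z + P z.
  rewrite /z (linear_opD (shift_op_linear sd)) (linear_opD (P_linear sd)).
  by rewrite (shift_S sd) (shift_P sd) (P_S sd) (P_idem sd) addr0 add0r subrK.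
have phi'_N : phi' (N z) = - phi' (F z).
  by rewrite -[N z](addrK (F z)) -shift_op_perturb linear_formB // (phi_shift sd') sub0r.
have phi_z : phi z = phi x.
  by rewrite /z linear_formD // (phi_S sd) add0r /P_of linear_formZ // (sd_normalized sd) mulr1.
by rewrite {1}ex linear_formD // phi'_N /P_of linear_formZ // phi_z addrC.
Qed.

Let g := opnorm S.
Let t := opnorm P.
Let g' := opnorm S'.
Let t' := opnorm P'.
Let h := opnorm E.
Let d := nK dl.
Let a := opnorm (opsub P' P).
Let Ff := formnorm phi'.
Let w := nX (u - u').

Let bS := S_bounded sd.
Let bS' := S_bounded sd'.
Let bP := P_bounded sd.
Let bP' := P_bounded sd'.
Let bE : bounded_op E := bounded_opsub (sd_bounded sd') (sd_bounded sd).
Let bPd : bounded_op (opsub P' P) := bounded_opsub bP' bP.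
Let g_ge0 : 0 <= g. Proof. exact: opnorm_ge0 bS. Qed.
Let t_ge0 : 0 <= t. Proof. exact: opnorm_ge0 bP. Qed.
Let g'_ge0 : 0 <= g'. Proof. exact: opnorm_ge0 bS'. Qed.
Let t'_ge0 : 0 <= t'. Proof. exact: opnorm_ge0 bP'. Qed.
Let h_ge0 : 0 <= h. Proof. exact: opnorm_ge0 bE. Qed.
Let a_ge0 : 0 <= a. Proof. exact: opnorm_ge0 bPd. Qed.
Let d_ge0 : 0 <= d. Proof. exact: nK_ge0 dl. Qed.
Let Ff_ge0 : 0 <= Ff. Proof. exact: formnorm_ge0 (sd_form sd'). Qed.

Lemma ler_F x : nX (F x) <= (h + d) * nX x.
Proof. by rewrite mulrDl; apply: le_trans (ler_nX_subZ _ _ _) _; rewrite lerD2r ler_opnorm. Qed.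

Lemma ler_S_add_P x : nX (S x + P x) <= (g + t) * nX x.
Proof. by rewrite mulrDl; apply: le_trans (ler_nXD _ _) _; apply: lerD; exact: ler_opnorm. Qed.

Lemma ler_phi'_F x : nK (phi' (F (S x + P x))) <= Ff * (h + d) * (g + t) * nX x.
Proof.
apply: le_trans (ler_formnorm (sd_form sd') _) _; rewrite -!mulrA ler_wpM2l //.
by apply: le_trans (ler_F _) _; rewrite ler_wpM2l ?addr_ge0 ?ler_S_add_P.
Qed.

Lemma opnorm_P'_sub_P_le :
  a <= t' * h * g + d * a * g + (g' * h * t + d * g' * a).
Proof.
apply: opnorm_le => [|x]; first by nonneg.
rewrite -[opsub _ _ x]/(P' x - P x).
have -> : P' x - P x = - (P' (E (S x)) - dl *: (P' (S x) - P (S x)))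
                       - (S' (E (P x)) - dl *: - S' (P' x - P x)).
  rewrite [LHS]P'_sub_P /F [in LHS](linear_opB lP') [in LHS](linear_opZ lP').
  rewrite [in LHS](linear_opB lS') [in LHS](linear_opZ lS').
  by rewrite (P_S sd) subr0 (linear_opB lS' (P' x)) (S_P sd') sub0r opprK.
rewrite -opprD nXN !mulrDl; apply: le_trans (ler_nXD _ _) _.
apply: lerD; apply: le_trans (ler_nX_subZ _ _ _) _; apply: lerD.
- exact: ler_opnorm3 bP' bE bS x.
- by rewrite -!mulrA ler_wpM2l // mulrA; exact: ler_opnorm2 bPd bS x.
- exact: ler_opnorm3 bS' bE bP x.
- by rewrite nXN -!mulrA ler_wpM2l // mulrA; exact: ler_opnorm2 bS' bPd x.
Qed.

Lemma opnorm_S'_sub_S_le : opnorm (opsub S' S) <=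
  g' * h * g + d * (g' * g) + (g' * g' * h * t + d * (g' * g' * a))
  + (t' * h * g * g + d * (a * g * g)).
Proof.
apply: opnorm_le => [|x]; first by nonneg.
rewrite -[opsub _ _ x]/(S' x - S x).
have -> : S' x - S x = - (S' (E (S x)) - dl *: S' (S x))
    + (S' (S' (E (P x))) - dl *: - S' (S' (P' x - P x)))
    + (P' (E (S (S x))) - dl *: (P' (S (S x)) - P (S (S x)))).
  have S'_P' : S' (P x) = - S' (P' x - P x).
    by rewrite (linear_opB lS' (P' x)) (S_P sd') sub0r opprK.
  rewrite S'_sub_S S'_P P'_S opprK /F (linear_opB lS' (E (S x))) (linear_opZ lS').
  rewrite (linear_opB lS' (E (P x))) (linear_opZ lS' dl (P x)) S'_P'.
  rewrite (linear_opB lS' (S' (E (P x)))) (linear_opZ lS') (linear_opN lS').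
  by rewrite (linear_opB lP' (E (S (S x)))) (linear_opZ lP') (P_S sd) subr0.
rewrite !mulrDl; apply: le_trans (ler_nXD _ _) _; apply: lerD.
  apply: le_trans (ler_nXD _ _) _; rewrite nXN; apply: lerD.
    apply: le_trans (ler_nX_subZ _ _ _) _; apply: lerD; first exact: ler_opnorm3 bS' bE bS x.
    by rewrite -!mulrA ler_wpM2l // mulrA; exact: ler_opnorm2 bS' bS x.
  apply: le_trans (ler_nX_subZ _ _ _) _; apply: lerD.
    exact: ler_opnorm4 bS' bS' bE bP x.
  by rewrite nXN -!mulrA ler_wpM2l // !mulrA; exact: ler_opnorm3 bS' bS' bPd x.
apply: le_trans (ler_nX_subZ _ _ _) _; apply: lerD; first exact: ler_opnorm4 bP' bE bS bS x.
by rewrite -!mulrA ler_wpM2l // !mulrA; exact: ler_opnorm3 bPd bS bS x.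
Qed.

Lemma ler_eigenvalue_shift : d * (1 - a) <= t' * h.
Proof.
have u_gt0 := nX_u_gt0 sd; rewrite -(ler_pM2r u_gt0).
have P'u_ge : nX u - a * nX u <= nX (P' u).
  have : nX (P' u - P u) <= a * nX u := ler_opnorm bPd u.
  rewrite (P_u sd) nX_subC.
  by have := ler_nXB u (u - P' u); rewrite subKr; lra.
apply: le_trans (_ : d * nX (P' u) <= _).
  by rewrite -mulrA mulrBl mul1r ler_wpM2l.
by rewrite -nXZ -P'_E_u; exact: ler_opnorm2 bP' bE u.
Qed.

Lemma phi'_u_eq : phi' u = 1 + phi' (u - u').
Proof. by rewrite linear_formB // (sd_normalized sd') addrC subrK. Qed.

Lemma ler_phi'_u : nK (phi' u) <= 1 + Ff * w.
Proof.
rewrite phi'_u_eq; apply: le_trans (ler_nKD _ _) _.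
by rewrite nK1 lerD2l; exact: ler_formnorm (sd_form sd') _.
Qed.

Lemma ger_phi'_u : 1 - Ff * w <= nK (phi' u).
Proof.
have := ler_nKD (phi' u) (- phi' (u - u')); rewrite phi'_u_eq addrK nK1 nKN.
by have := ler_formnorm (sd_form sd') (u - u'); rewrite -phi'_u_eq -/Ff -/w; lra.
Qed.

Lemma ler_phi'_mul_u x :
  nK (phi' x) * nX u <= (t * (1 + Ff * w) + Ff * (h + d) * (g + t) * nX u) * nX x.
Proof.
have expand : nK (phi' x) <= nK (phi x) * nK (phi' u) + nK (phi' (F (S x + P x))).
  by rewrite phi'_expand -nKM; apply: le_trans (ler_nKD _ _) _; rewrite nKN.
apply: le_trans (ler_wpM2r (nX_ge0 u) expand) _.
have -> : (t * (1 + Ff * w) + Ff * (h + d) * (g + t) * nX u) * nX x =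
    t * nX x * (1 + Ff * w) + Ff * (h + d) * (g + t) * nX x * nX u by ring.
rewrite mulrDl mulrAC; apply: lerD; last exact/ler_wpM2r/ler_phi'_F/nX_ge0.
apply: ler_pM; rewrite ?mulr_ge0 ?nK_ge0 ?nX_ge0 //; [exact: ler_phi sd x | exact: ler_phi'_u].
Qed.

Lemma ler_formnorm_phi' :
  Ff * nX u <= t * (1 + Ff * w) + Ff * (h + d) * (g + t) * nX u.
Proof.
have u_gt0 := nX_u_gt0 sd; have w_ge0 : 0 <= w := nX_ge0 _.
rewrite -ler_pdivlMr //; apply: formnorm_le => [|x].
  by nonneg.
by rewrite -(ler_pM2r u_gt0) mulrAC divfK ?gt_eqF // ler_phi'_mul_u.
Qed.

Lemma ler_opnorm_P' : t' <= Ff * nX u'.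
Proof.
apply: opnorm_le => [|x]; first by nonneg.
by rewrite /P_of nXZ mulrAC ler_wpM2r ?nX_ge0 //; exact: ler_formnorm (sd_form sd') x.
Qed.

Lemma ler_S' x : nX (S' x) <=
  (g + t) * ((1 + t') * nX x + (h + d) * nX (S' x) + nK (phi (S' x)) * nX u).
Proof.
set y := S' x; set v := N y + P y.
apply: le_trans (_ : nX y <= (g + t) * nX v) _.
  by rewrite -{1}(S_add_P_shift_add_P sd y); exact: ler_S_add_P.
rewrite ler_wpM2l ?addr_ge0 //.
have -> : v = x - P' x - F y + phi y *: u.
  by rewrite /v -(shift_S sd') -/y shift_op_perturb addrK.
apply: le_trans (ler_nXD _ _) _; rewrite nXZ lerD2r.
apply: le_trans (ler_nXD _ _) _; rewrite nXN; apply: lerD; last exact: ler_F.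
by apply: le_trans (ler_nXD _ _) _; rewrite nXN mulrDl mul1r lerD2l; exact: ler_opnorm bP' x.
Qed.

Lemma ler_phi_S' x :
  nK (phi (S' x)) * nK (phi' u) <= Ff * (h + d) * (g + t) * nX (S' x).
Proof.
have := phi'_expand (S' x); rewrite (phi_S sd') => /eqP; rewrite eq_sym subr_eq0.
by move=> /eqP phi'_F; rewrite -nKM phi'_F; exact: ler_phi'_F.
Qed.

Section APriori.
Hypothesis u_close : 4 * t * w <= nX u.
Hypothesis L_close : (g + t) * (h + d) * (1 + 4 * t * (g + t)) <= 1 / 4.

Let t_ge1 : 1 <= t. Proof. exact: opnorm_P_ge1 sd. Qed.
Let u_gt0 : 0 < nX u. Proof. exact: nX_u_gt0 sd. Qed.
Let w_ge0 : 0 <= w. Proof. exact: nX_ge0 _. Qed.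

Let hd_small : (h + d) * (g + t) <= 1 / 4.
Proof.
apply: le_trans L_close; rewrite [(g + t) * _]mulrC.
by apply: ler_peMr; [nonneg | rewrite lerDl; nonneg].
Qed.

Lemma apriori_formnorm : Ff * nX u <= 2 * t.
Proof.
have e1 : t * (Ff * w) * 4 <= Ff * nX u.
  by have := ler_wpM2l Ff_ge0 u_close; rewrite !mulrA; nra.
have e2 : Ff * (h + d) * (g + t) * nX u <= Ff * nX u / 4.
  by have := mulr_ge0 Ff_ge0 (ltW u_gt0); have := hd_small; nra.
by have := ler_formnorm_phi'; nra.
Qed.

Lemma apriori_formnorm_w : Ff * w <= 1 / 2.
Proof.
have k1 : Ff * nX u * (4 * t * w) <= Ff * nX u * nX u.
  by rewrite ler_wpM2l // mulr_ge0 // ltW.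
have k2 : Ff * nX u * nX u <= 2 * t * nX u := ler_wpM2r (ltW u_gt0) apriori_formnorm.
have k3 : Ff * w * (4 * t * nX u) <= 1 / 2 * (4 * t * nX u) by nra.
by rewrite ler_pM2r ?pmulr_rgt0 // in k3; exact: lt_le_trans ltr01 t_ge1.
Qed.

Lemma apriori_P' : t' <= 3 * t.
Proof.
apply: le_trans ler_opnorm_P' _.
have : nX u' <= nX u + w.
  by rewrite /w nX_subC; have := ler_nXD u (u' - u); rewrite addrC subrK.
have := apriori_formnorm; have := apriori_formnorm_w; have := Ff_ge0; have := t_ge1.
nra.
Qed.

Lemma ler_phi_S'_u x : nK (phi (S' x)) * nX u <= 4 * t * (h + d) * (g + t) * nX (S' x).
Proof.
have phi_S'_le : nK (phi (S' x)) <= 2 * Ff * (h + d) * (g + t) * nX (S' x).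
  have : nK (phi (S' x)) * (1 / 2) <= nK (phi (S' x)) * nK (phi' u).
    by rewrite ler_wpM2l ?nK_ge0 //; have := ger_phi'_u; have := apriori_formnorm_w; lra.
  by have := ler_phi_S' x; nra.
have r2 : 0 <= (h + d) * (g + t) * nX (S' x) by nonneg.
have r3 : Ff * nX u * ((h + d) * (g + t) * nX (S' x)) <=
          2 * t * ((h + d) * (g + t) * nX (S' x)) := ler_wpM2r r2 apriori_formnorm.
by have := ler_wpM2r (ltW u_gt0) phi_S'_le; nra.
Qed.

Lemma apriori_S' : g' <= 2 * (g + t) * (1 + 3 * t).
Proof.
apply: opnorm_le => [|x]; first by nonneg.
set y := S' x; have y_ge0 : 0 <= nX y := nX_ge0 _.
have q1 : (g + t) * (1 + t') * nX x <= (g + t) * (1 + 3 * t) * nX x.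
  by apply/ler_wpM2r/ler_wpM2l; rewrite ?lerD2l ?apriori_P'; nonneg.
have q2 : (g + t) * (h + d) * (1 + 4 * t * (g + t)) * nX y <= 1 / 4 * nX y :=
  ler_wpM2r y_ge0 L_close.
have q3 : (g + t) * (nK (phi y) * nX u) <= (g + t) * (4 * t * (h + d) * (g + t) * nX y).
  by apply/ler_wpM2l/ler_phi_S'_u; nonneg.
have q4 : 0 <= (g + t) * (1 + 3 * t) * nX x by nonneg.
by have := ler_S' x; rewrite -/y; nra.
Qed.

End APriori.

End Perturbation.

(** * Arithmetic of the small-[h] estimates *)

Section Arith.
Variable R : realType.
Implicit Types x y X Y h : R.

(* First-order bookkeeping in a small parameter [h]: such bounds are closed under
   sums, and under products when [0 <= h <= 1]. *)
Definition lin_ub h x (x0 : R) X := [/\ 0 <= x, 0 <= x0, 0 <= X & x <= x0 + X * h].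

Lemma lin_ubM h x y (x0 y0 : R) X Y : 0 <= h <= 1 ->
  lin_ub h x x0 X -> lin_ub h y y0 Y -> lin_ub h (x * y) (x0 * y0) (x0 * Y + X * y0 + X * Y).
Proof.
move=> /andP[h0 h1] [x0' hx0 hX hx] [y0' hy0 hY hy].
split; try by nonneg.
have e1 : x * y <= (x0 + X * h) * (y0 + Y * h) by apply: ler_pM.
apply: le_trans e1 _.
have k : h * h <= h by nra.
have : X * Y * (h * h) <= X * Y * h.
  by apply: ler_wpM2l => //; exact: mulr_ge0.
nra.
Qed.

Lemma lin_ubD h x y (x0 y0 : R) X Y :
  lin_ub h x x0 X -> lin_ub h y y0 Y -> lin_ub h (x + y) (x0 + y0) (X + Y).
Proof. move=> [? ? ? ?] [? ? ? ?]; split; try exact: addr_ge0; lra. Qed.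

Lemma lin_ub_le h x y (x0 : R) X : 0 <= x -> x <= y -> lin_ub h y x0 X -> lin_ub h x x0 X.
Proof. move=> ? ? [? ? ? ?]; split => //; lra. Qed.

Lemma lin_ub_cst h x (x0 : R) : 0 <= x -> x <= x0 -> lin_ub h x x0 0.
Proof. move=> ? ?; split => //; rewrite ?mul0r ?addr0 //; lra. Qed.

(* [ah], [sh], [dh] stand for ||P' - P|| / h, ||S' - S|| / h and |lam' - lam| / h. *)
Lemma ratio_refined_bound (g t A S K : R) : 0 <= g -> 0 <= t -> 0 <= A -> 0 <= S -> 0 <= K ->
  exists M, 0 <= M /\ forall h t' g' ah sh dh,
   0 <= h <= 1 -> 0 <= t' -> 0 <= g' -> 0 <= ah -> 0 <= sh -> 0 <= dh ->
   t' <= t + ah * h -> g' <= g + sh * h -> ah <= A -> sh <= S -> dh <= K ->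
   ah <= t' * g + g' * t + dh * h * ah * (g + g') ->
   sh <= g' * g + dh * g' * g + g' * g' * t + dh * h * g' * g' * ah + t' * g * g
         + dh * h * ah * g * g ->
   dh <= t' + dh * (ah * h) ->
   g' * ah + t * sh <= 3 * g * g * t + 3 * g * g * t * t + M * h.
Proof.
(* [M] is left as an evar and read off from the final [ring] step. *)
move=> g0 t0 A0 S0 K0; eexists; split; last first.
move=> h t' g' ah sh dh hh t'0 g'0 ah0 sh0 dh0 Ht Hg HA HS HK H1 H2 H3.
have h0 : 0 <= h by case/andP: hh.
have lt' : lin_ub h t' t A.
  split => //; apply: le_trans Ht _; rewrite lerD2l ler_wpM2r //.
have lg' : lin_ub h g' g S.
  split => //; apply: le_trans Hg _; rewrite lerD2l ler_wpM2r //.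
have ldhh : lin_ub h (dh * h) 0 K by split; rewrite ?lexx ?add0r ?ler_wpM2r ?mulr_ge0.
have lA : lin_ub h ah A 0 := lin_ub_cst h ah0 HA.
have lK : lin_ub h dh K 0 := lin_ub_cst h dh0 HK.
have lahh : lin_ub h (ah * h) 0 A by split; rewrite ?lexx ?add0r ?ler_wpM2r ?mulr_ge0.
have cg : lin_ub h g g 0 := lin_ub_cst h g0 (lexx g).
have ct : lin_ub h t t 0 := lin_ub_cst h t0 (lexx t).
have m1 := lin_ubM hh lt' cg.
have m2 := lin_ubM hh lg' ct.
have m3 := lin_ubM hh (lin_ubM hh ldhh lA) (lin_ubD cg lg').
have lah := lin_ub_le ah0 H1 (lin_ubD (lin_ubD m1 m2) m3).
have m4 := lin_ubM hh lK lahh.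
have ldh := lin_ub_le dh0 H3 (lin_ubD lt' m4).
have n1 := lin_ubM hh lg' cg.
have n2 := lin_ubM hh (lin_ubM hh ldh lg') cg.
have n3 := lin_ubM hh (lin_ubM hh lg' lg') ct.
have n4 := lin_ubM hh (lin_ubM hh (lin_ubM hh ldhh lg') lg') lA.
have n5 := lin_ubM hh (lin_ubM hh lt' cg) cg.
have n6 := lin_ubM hh (lin_ubM hh (lin_ubM hh ldhh lA) cg) cg.
have lsh := lin_ub_le sh0 H2 (lin_ubD (lin_ubD (lin_ubD (lin_ubD (lin_ubD n1 n2) n3) n4) n5) n6).
have lfin := lin_ubD (lin_ubM hh lg' lah) (lin_ubM hh ct lsh).
case: lfin => _ _ _ hle; apply: le_trans hle _.
apply: lerD; last exact: lexx.
apply: le_of_eq; ring.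
by nonneg.
Qed.

Lemma ratio_apriori_bounds (g t T G K h t' g' ah sh dh : R) :
  0 <= g -> 0 <= t -> 0 <= T -> 0 <= G -> 0 <= K -> 0 <= h <= 1 ->
  0 <= t' -> 0 <= g' -> 0 <= ah -> 0 <= sh -> 0 <= dh ->
  t' <= T -> g' <= G -> dh <= K -> dh * h * (g + G) <= 1 / 2 ->
   ah <= t' * g + g' * t + dh * h * ah * (g + g') ->
   sh <= g' * g + dh * g' * g + g' * g' * t + dh * h * g' * g' * ah + t' * g * g
         + dh * h * ah * g * g ->
  ah <= 2 * (T * g + G * t) /\
  sh <= G * g + K * G * g + G * G * t + K * G * G * (2 * (T * g + G * t))
        + T * g * g + K * (2 * (T * g + G * t)) * g * g.
Proof.
move=> g0 t0 T0 G0 K0 hh t'0 g'0 ah0 sh0 dh0 hT hG hK hd H1 H2.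
have h0 : 0 <= h by case/andP: hh.
have h1 : h <= 1 by case/andP: hh.
(* With [h = 0], [lin_ub] merely records monotonicity of nonnegative products. *)
have z1 : 0 <= (0 : R) <= 1 by rewrite lexx ler01.
have hA : ah <= 2 * (T * g + G * t).
  have k1 : t' * g <= T * g by apply: ler_wpM2r.
  have k2 : g' * t <= G * t by apply: ler_wpM2r.
  have k3 : dh * h * ah * (g + g') <= ah * (1 / 2).
    have : dh * h * (g + g') <= dh * h * (g + G).
      have hp : 0 <= dh * h by exact: mulr_ge0.
      by rewrite ler_wpM2l // lerD2l.
    move=> k; have k' : dh * h * (g + g') <= 1 / 2 by lra.
    have := ler_wpM2l ah0 k'; lra.
  lra.
split => //.
have lg := lin_ub_cst 0 g'0 hG.
have lt := lin_ub_cst 0 t'0 hT.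
have ld := lin_ub_cst 0 dh0 hK.
have ldh : lin_ub 0 (dh * h) K 0.
  apply: lin_ub_cst; first exact: mulr_ge0.
  by rewrite -[K]mulr1; apply: ler_pM.
have la := lin_ub_cst 0 ah0 hA.
have cg := lin_ub_cst 0 g0 (lexx g).
have ct := lin_ub_cst 0 t0 (lexx t).
have n1 := lin_ubM z1 lg cg.
have n2 := lin_ubM z1 (lin_ubM z1 ld lg) cg.
have n3 := lin_ubM z1 (lin_ubM z1 lg lg) ct.
have n4 := lin_ubM z1 (lin_ubM z1 (lin_ubM z1 ldh lg) lg) la.
have n5 := lin_ubM z1 (lin_ubM z1 lt cg) cg.
have n6 := lin_ubM z1 (lin_ubM z1 (lin_ubM z1 ldh la) cg) cg.
have lsh := lin_ub_le sh0 H2 (lin_ubD (lin_ubD (lin_ubD (lin_ubD (lin_ubD n1 n2) n3) n4) n5) n6).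
case: lsh => _ _ _; rewrite mulr0 addr0 => hle; apply: le_trans hle _.
apply: le_of_eq; ring.
Qed.

Lemma ler_dist_mul (g t g' t' a s : R) : 0 <= t -> 0 <= g' ->
  t' <= t + a -> t <= t' + a -> g' <= g + s -> g <= g' + s ->
  `|g * t - g' * t'| <= g' * a + t * s.
Proof.
move=> t0 g'0 ht'a htt' hg's hgg'.
have p1 : g' * (t' - t) <= g' * a by apply: ler_wpM2l => //; lra.
have p2 : g' * (t - t') <= g' * a by apply: ler_wpM2l => //; lra.
have p3 : t * (g' - g) <= t * s by apply: ler_wpM2l => //; lra.
have p4 : t * (g - g') <= t * s by apply: ler_wpM2l => //; lra.
by rewrite ler_norml; apply/andP; split; lra.
Qed.

Lemma perturbation_arith (g t K : R) : 0 <= g -> 1 <= t -> 0 <= K ->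
  let G := 2 * (g + t) * (1 + 3 * t) in
  exists M, 0 <= M /\ forall h t' g' a s d,
    0 < h <= 1 -> 0 <= t' -> 0 <= g' -> 0 <= a -> 0 <= s -> 0 <= d ->
    t' <= 3 * t -> g' <= G -> d <= K * h -> d * (g + G) <= 1 / 2 ->
    t' <= t + a -> t <= t' + a -> g' <= g + s -> g <= g' + s ->
    a <= t' * h * g + d * a * g + (g' * h * t + d * g' * a) ->
    s <= g' * h * g + d * (g' * g) + (g' * g' * h * t + d * (g' * g' * a))
         + (t' * h * g * g + d * (a * g * g)) ->
    d * (1 - a) <= t' * h ->
    `|g * t - g' * t'| <= (6 * g ^+ 2 * t ^+ 2 + M * h) * h.
Proof.
move=> g0 t1 K0 G; have t0 : 0 <= t by lra.
set T := 3 * t; set A := 2 * (T * g + G * t).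
set Sc := G * g + K * G * g + G * G * t + K * G * G * A + T * g * g + K * A * g * g.
have T0 : 0 <= T by rewrite /T; lra.
have G0 : 0 <= G by rewrite /G; nonneg; lra.
have A0 : 0 <= A by rewrite /A; nonneg.
have Sc0 : 0 <= Sc by rewrite /Sc; nonneg.
have [M [M0 refined]] := ratio_refined_bound g0 t0 A0 Sc0 K0.
exists M; split => // h t' g' a s d /andP[h_gt0 h_le1] t'0 g'0 a0 s0 d0 hT hG hK hdG.
move=> ht'a htt' hg's hgg' ha hs hd.
set ah := a / h; set sh := s / h; set dh := d / h.
have hn0 : h != 0 by rewrite gt_eqF.
have ea : a = ah * h by rewrite /ah divfK.
have es : s = sh * h by rewrite /sh divfK.
have ed : d = dh * h by rewrite /dh divfK.
have ah0 : 0 <= ah by rewrite /ah divr_ge0 // ltW.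
have sh0 : 0 <= sh by rewrite /sh divr_ge0 // ltW.
have dh0 : 0 <= dh by rewrite /dh divr_ge0 // ltW.
have H1 : ah <= t' * g + g' * t + dh * h * ah * (g + g').
  rewrite -(ler_pM2r h_gt0) -ea; apply: le_trans ha _.
  by rewrite ea ed; apply: le_of_eq; ring.
have H2 : sh <= g' * g + dh * g' * g + g' * g' * t + dh * h * g' * g' * ah + t' * g * g
         + dh * h * ah * g * g.
  rewrite -(ler_pM2r h_gt0) -es; apply: le_trans hs _.
  by rewrite ed ea; apply: le_of_eq; ring.
have H3 : dh <= t' + dh * (ah * h).
  rewrite -(ler_pM2r h_gt0); move: hd; rewrite ed ea.
  have -> : dh * h * (1 - ah * h) = dh * h - dh * (ah * h) * h by ring.
  nra.
have hdK : dh <= K by rewrite -(ler_pM2r h_gt0) -ed.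
have hh : 0 <= h <= 1 by rewrite ltW.
have [hA hS] := ratio_apriori_bounds g0 t0 T0 G0 K0 hh t'0 g'0 ah0 sh0 dh0 hT hG hdK
  ltac:(by rewrite -ed) H1 H2.
have hQ := refined h t' g' ah sh dh hh t'0 g'0 ah0 sh0 dh0
  ltac:(by rewrite -ea) ltac:(by rewrite -es) hA hS hdK H1 H2 H3.
have k1 := ler_dist_mul t0 g'0 ht'a htt' hg's hgg'.
have k2 : g' * a + t * s = (g' * ah + t * sh) * h by rewrite ea es; ring.
have k3 : 3 * g * g * t + 3 * g * g * t * t <= 6 * g ^+ 2 * t ^+ 2.
  have : g * g * t <= g * g * t * t by rewrite ler_peMr ?mulr_ge0.
  rewrite !expr2; lra.
apply: le_trans k1 _; rewrite k2; apply: ler_wpM2r; [exact: ltW | lra].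
Qed.

Lemma ler_radius (c y h : R) : 0 <= c -> 0 < y -> 0 <= h -> h < y / (c + 1) -> c * h <= y.
Proof.
move=> c0 y0 h0; rewrite ltr_pdivlMr ?ltr_wpDl //; nra.
Qed.

Lemma small_perturbation_radius (g t Kl Ku nu M e : R) :
  0 <= g -> 1 <= t -> 0 <= Kl -> 0 <= Ku -> 0 < nu -> 0 <= M -> 0 < e ->
  let G := 2 * (g + t) * (1 + 3 * t) in
  exists2 r, 0 < r & forall h d w, 0 <= h < r -> 0 <= d <= Kl * h -> 0 <= w <= Ku * h ->
    [/\ h <= 1, 4 * t * w <= nu, (g + t) * (h + d) * (1 + 4 * t * (g + t)) <= 1 / 4,
        d * (g + G) <= 1 / 2 & M * h <= e].
Proof.
move=> g0 t1 Kl0 Ku0 nu0 M0 e0 G; have t0 : 0 <= t by lra.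
have G0 : 0 <= G by rewrite /G; nonneg; lra.
set cw := 4 * t * Ku; set cL := (g + t) * (1 + Kl) * (1 + 4 * t * (g + t)).
set cd := Kl * (g + G).
have cw0 : 0 <= cw by rewrite /cw; nonneg.
have cL0 : 0 <= cL by rewrite /cL; nonneg.
have cd0 : 0 <= cd by rewrite /cd; nonneg.
have q0 : (0 : R) < 1 / 4 by lra.
have q1 : (0 : R) < 1 / 2 by lra.
exists (Num.min 1 (Num.min (nu / (cw + 1)) (Num.min (1 / 4 / (cL + 1))
          (Num.min (1 / 2 / (cd + 1)) (e / (M + 1)))))).
  by rewrite !lt_min ltr01 !divr_gt0 // ltr_wpDl.
move=> h d w /andP[h0]; rewrite !lt_min => /and5P[h1 hw hL hd hM] /andP[d0 dK] /andP[w0 wK].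
split; first exact: ltW.
- have t4 : 0 <= 4 * t by nonneg.
  have := ler_wpM2l t4 wK; have := ler_radius cw0 nu0 h0 hw.
  by rewrite /cw -mulrA; lra.
- have hdK : h + d <= (1 + Kl) * h by lra.
  have P0 : 0 <= (g + t) * (1 + 4 * t * (g + t)) by nonneg.
  have := ler_wpM2l P0 hdK; have := ler_radius cL0 q0 h0 hL.
  have -> : cL * h = (g + t) * (1 + 4 * t * (g + t)) * ((1 + Kl) * h) by rewrite /cL; ring.
  have -> : (g + t) * (h + d) * (1 + 4 * t * (g + t)) =
            (g + t) * (1 + 4 * t * (g + t)) * (h + d) by ring.
  lra.
- have gG0 : 0 <= g + G by nonneg.
  have := ler_wpM2r gG0 dK; have := ler_radius cd0 q1 h0 hd.
  have -> : cd * h = Kl * h * (g + G) by rewrite /cd; ring.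
  lra.
- exact: ler_radius M0 e0 h0 hM.
Qed.

End Arith.

(** * Analytic maps are locally Lipschitz *)

Section AnalyticLipschitz.
Variables (R : realType) (b : bool) (X : completeNormedModType (scal R b)).
Local Notation K := (scal R b).
Variables (Y : zmodType) (scaleY : K -> Y -> Y) (nY : Y -> R).
Hypothesis scaleN1Y : forall y, scaleY (-1) y = - y.
Hypothesis nY_triangle : forall y z, nY (y + z) <= nY y + nY z.
Hypothesis nY_eq0 : forall y, nY y <= 0 -> y = 0.
Hypothesis nY0 : nY 0 = 0.


Lemma ler_nY_sum n (F : 'I_n -> Y) : nY (\sum_(k < n) F k) <= \sum_(k < n) nY (F k).
Proof.
elim/big_ind2: _ => [|y1 r1 y2 r2 e1 e2|//]; first by rewrite nY0.
by apply: le_trans (nY_triangle _ _) _; apply: lerD.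
Qed.

Variables (f : (X -> X) -> Y) (L : X -> X).
Variables (r : R) (A : nat -> (nat -> X -> X) -> Y) (C : nat -> R) (M : R).
Hypothesis r_gt0 : 0 < r.
Hypothesis A_dep : forall k h h', (forall i, (i < k)%N -> h i = h' i) -> A k h = A k h'.
Hypothesis A_bounded : forall k h, (forall j, bounded_op (h j)) ->
  0 <= C k /\ nY (A k h) <= C k * \prod_(i < k) opnorm (h i).
Hypothesis C_summable : forall n, \sum_(k < n) C k * r ^+ k <= M.
Hypothesis f_expand : forall H, bounded_op H -> opnorm H < r ->
  forall eps : R, 0 < eps -> exists N : nat, forall n, (N <= n)%N ->
    nY (f (opadd L H) + scaleY (-1) (\sum_(k < n) A k (fun _ => H))) < eps.

Let zero : nat -> X -> X := fun _ _ => 0.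

Lemma series_term_at0 k : (0 < k)%N -> A k zero = 0.
Proof.
case: k => // k _; apply: nY_eq0.
have [_ hC] := @A_bounded k.+1 zero (fun _ => @bounded_op0 _ _ X).
by apply: le_trans hC _; rewrite big_ord_recl opnorm0 mul0r mulr0.
Qed.

Lemma series_at_center : f L = A 0 zero.
Proof.
have fL0 : opadd L (fun _ => 0) = L by apply/funext => x; rewrite /opadd addr0.
apply/eqP; rewrite -subr_eq0; apply/eqP/nY_eq0/ler_addgt0Pr => e e0; rewrite add0r.
have [N hN] := f_expand (@bounded_op0 _ _ X) ltac:(by rewrite opnorm0) e0.
have := hN N.+1 (leqnSn N); rewrite fL0 big_ord_recl big1 ?addr0 ?scaleN1Y => [/ltW //|i _].
exact: series_term_at0.
Qed.

(* Comparing the expansion at [L + H] with its constant term, each term of order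
   [k >= 1] is at most [C k r^k * (opnorm H / r)]. *)
Lemma series_lipschitz H : bounded_op H -> opnorm H < r ->
  nY (f (opadd L H) - f L) <= M / r * opnorm H.
Proof.
move=> bH Hr; set h := opnorm H; have h0 : 0 <= h := opnorm_ge0 bH.
have C0 k : 0 <= C k by have [] := @A_bounded k (fun _ => H) (fun _ => bH).
apply/ler_addgt0Pr => e e0.
have [N hN] := f_expand bH Hr e0.
have := hN N.+1 (leqnSn N); rewrite big_ord_recl scaleN1Y.
rewrite (A_dep (h' := zero)) // -series_at_center.
set Sg := \sum_(i < N) _ => rest.
have -> : f (opadd L H) - f L = (f (opadd L H) - (f L + Sg)) + Sg.
  by rewrite opprD addrA subrK.
apply: le_trans (nY_triangle _ _) _; rewrite addrC; apply: lerD; last exact: ltW.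
apply: le_trans (ler_nY_sum _) _.
have term_le (i : 'I_N) :
    nY (A (bump 0 i) (fun _ => H)) <= h / r * (C (bump 0 i) * r ^+ bump 0 i).
  have [_ hb] := @A_bounded (bump 0 i) (fun _ => H) (fun _ => bH).
  apply: le_trans hb _; rewrite prodr_const card_ord mulrCA ler_wpM2l //.
  rewrite /bump /= add1n exprS exprS mulrA divfK ?gt_eqF //.
  by apply: ler_wpM2l => //; apply: lerXn2r => //; exact: ltW.
apply: le_trans (ler_sum _ (fun i _ => term_le i)) _.
have -> : M / r * h = h / r * M by ring.
rewrite -mulr_sumr; apply: ler_wpM2l; first by nonneg.
by apply: le_trans (C_summable N.+1); rewrite big_ord_recl expr0 mulr1 lerDr.
Qed.

End AnalyticLipschitz.

Lemma analytic_on_lipschitz (R : realType) (b : bool) (X : completeNormedModType (scal R b))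
    (Y : zmodType) (scaleY : scal R b -> Y -> Y) (nY : Y -> R)
    (V : set (X -> X)) (f : (X -> X) -> Y) (L : X -> X) :
  (forall y, scaleY (-1) y = - y) -> (forall y z, nY (y + z) <= nY y + nY z) ->
  (forall y, nY y <= 0 -> y = 0) -> nY 0 = 0 ->
  analytic_on 0 +%R scaleY nY V f -> V L ->
  exists2 Kf, 0 <= Kf & exists2 rf, 0 < rf & forall H, bounded_op H -> opnorm H < rf ->
    nY (f (opadd L H) - f L) <= Kf * opnorm H.
Proof.
move=> scaleN1Y nYD nY_eq0 nY0 fan VL.
have [r [A [C [r_gt0 [Adep _ Abnd [M CM] fexp]]]]] := fan L VL.
have M_ge0 : 0 <= M by have := CM 0%N; rewrite big_ord0.
exists (M / r); first by nonneg.
by exists r => // H; exact: (series_lipschitz scaleN1Y nYD nY_eq0 nY0 r_gt0 Adep Abnd CM fexp).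
Qed.

Lemma metric_deriv_le (R : realType) (b : bool) (X : completeNormedModType (scal R b))
    (f : (X -> X) -> R) (L : X -> X) (c : R) :
  (forall e : R, 0 < e -> exists2 r : R, 0 < r & forall L', bounded_op L' ->
     0 < opnorm (opsub L L') < r -> `|f L - f L'| <= (c + e) * opnorm (opsub L L')) ->
  (metric_deriv f L <= c%:E)%E.
Proof.
move=> near_bound; apply/lee_addgt0Pr => e e0.
have [r r0 hr] := near_bound e e0.
apply: le_trans (ereal_inf_lbound _) _; first by exists r.
apply: ge_ereal_sup => _ [L' [bL' /andP[hp hr']] <-].
by rewrite -EFinD lee_fin ler_pdivrMr // hr // hp.
Qed.

(** * The local estimate *)

Section LocalEstimate.
Variables (R : realType) (b : bool) (X : completeNormedModType (scal R b)).
Local Notation K := (scal R b).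
Local Notation nX := (@nX R b X).
Local Notation nK := (@nK R b).
Variables (L : X -> X) (lam : K) (u : X) (phi : X -> K) (S : X -> X).
Hypothesis sd : spectral_data L lam u phi S.
Variables (Kl Ku : R).
Hypotheses (Kl_ge0 : 0 <= Kl) (Ku_ge0 : 0 <= Ku).

Lemma local_estimate e : 0 < e -> exists2 r, 0 < r & forall L' lam' u' phi' S',
  spectral_data L' lam' u' phi' S' -> 0 < opnorm (opsub L' L) < r ->
  nK (lam' - lam) <= Kl * opnorm (opsub L' L) -> nX (u - u') <= Ku * opnorm (opsub L' L) ->
  `|opnorm S * opnorm (P_of u phi) - opnorm S' * opnorm (P_of u' phi')| <=
    (6 * opnorm S ^+ 2 * opnorm (P_of u phi) ^+ 2 + e) * opnorm (opsub L' L).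
Proof.
move=> e_gt0; have g_ge0 := opnorm_ge0 (S_bounded sd); have t_ge1 := opnorm_P_ge1 sd.
have [M [M_ge0 estimate]] := perturbation_arith g_ge0 t_ge1 Kl_ge0.
have [r r_gt0 small] :=
  small_perturbation_radius g_ge0 t_ge1 Kl_ge0 Ku_ge0 (nX_u_gt0 sd) M_ge0 e_gt0.
exists r => // L' lam' u' phi' S' sd' /andP[h_gt0 h_lt] hd hw.
have [bP bP'] := (P_bounded sd, P_bounded sd').
have [bS bS'] := (S_bounded sd, S_bounded sd').
have [h_le1 u_close L_close d_small Mh_le] :=
  small (opnorm (opsub L' L)) (nK (lam' - lam)) (nX (u - u'))
  ltac:(by rewrite (ltW h_gt0) h_lt) ltac:(by rewrite nK_ge0 hd) ltac:(by rewrite nX_ge0 hw).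
apply: le_trans (estimate _ _ _ _ _ _ _ (opnorm_ge0 bP') (opnorm_ge0 bS')
  (opnorm_ge0 (bounded_opsub bP' bP)) (opnorm_ge0 (bounded_opsub bS' bS)) (nK_ge0 _)
  (apriori_P' sd sd' u_close L_close) (apriori_S' sd sd' u_close L_close) hd d_small
  (opnorm_subr bP bP') _ (opnorm_subr bS bS') _ (opnorm_P'_sub_P_le sd sd')
  (opnorm_S'_sub_S_le sd sd') (ler_eigenvalue_shift sd sd')) _.
- by rewrite h_gt0.
- by rewrite opnorm_subC; exact: opnorm_subr.
- by rewrite opnorm_subC; exact: opnorm_subr.
by apply: ler_wpM2r; [exact: ltW | rewrite lerD2l].
Qed.

End LocalEstimate.

Unset Implicit Arguments.
Theorem corollary5p3 (R : realType) (b : bool) (X : completeNormedModType (scal R b))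
  (L0 : X -> X) (lam0 : scal R b) (V : set (X -> X))
  (lam : (X -> X) -> scal R b) (u : (X -> X) -> X) (phi : (X -> X) -> X -> scal R b) :
  bounded_op L0 ->
  simple_isolated_eigenvalue L0 lam0 ->
  open_in_BX V -> V L0 ->
  analytic_on 0 +%R *%R (@nK R b) V lam ->
  analytic_on 0 +%R *:%R (@nX R b X) V u ->
  analytic_on (fun _ => 0) (fun f g x => f x + g x) (fun a f x => a * f x)
              (@formnorm R b X) V phi ->
  lam L0 = lam0 ->
  (forall L, V L ->
     simple_isolated_eigenvalue L (lam L) /\
     [/\ u L != 0, L (u L) = lam L *: u L,
         bounded_form (phi L),
         (forall x, phi L (L x) = lam L * phi L x) &
         phi L (u L) = 1]) ->
  forall L, V L ->
    (metric_deriv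
       (fun L' => (opnorm (S_of L' (lam L') (u L') (phi L')) *
                   opnorm (P_of (u L') (phi L')))%R) L
     <= (6 * (opnorm (S_of L (lam L) (u L) (phi L))) ^+ 2 *
             (opnorm (P_of (u L) (phi L))) ^+ 2)%R%:E)%E.
Proof.
move=> _ _ V_open _ lam_an u_an _ _ V_spec L VL.
have sd_V L' : V L' ->
    spectral_data L' (lam L') (u L') (phi L') (S_of L' (lam L') (u L') (phi L')).
  move=> VL'; have [sie [_ Lu bphi phiL phiu]] := V_spec L' VL'.
  exact: spectral_data_S_of (V_open L' VL').1 sie Lu bphi phiL phiu.
have [bL [rV [rV_gt0 V_nbhd]]] := V_open L VL.
have [Kl Kl_ge0 [rl rl_gt0 lam_lip]] := analytic_on_lipschitz (@mulN1r _)
  (@ler_nKD R b) (@nK_le0 R b) (@nK0 R b) lam_an VL.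
have [Ku Ku_ge0 [ru ru_gt0 u_lip]] := analytic_on_lipschitz (@scaleN1r _ _)
  (@ler_nXD R b X) (@nX_le0 R b X) (@nX0 R b X) u_an VL.
apply: metric_deriv_le => e e_gt0.
have [r r_gt0 estimate] := local_estimate (sd_V L VL) Kl_ge0 Ku_ge0 e_gt0.
exists (Num.min (Num.min rV r) (Num.min rl ru)) => [|L' bL'].
  by rewrite !lt_min rV_gt0 r_gt0 rl_gt0 ru_gt0.
rewrite opnorm_subC => /andP[h_gt0]; rewrite !lt_min => /andP[/andP[hV hr] /andP[hl hu]].
have bH := bounded_opsub bL' bL.
have L'E : opadd L (opsub L' L) = L' by apply/funext => x; rewrite /opadd /opsub addrC subrK.
have := lam_lip _ bH hl; have := u_lip _ bH hu; rewrite L'E nX_subC => hw hd.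
exact: estimate _ _ _ _ _ (sd_V L' (V_nbhd L' bL' hV)) (introT andP (conj h_gt0 hr)) hd hw.
Qed.
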